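(* Let $L\ge1$ and let $\beta=x_1^{a_1}x_2^{a_2}\cdots x_1^{a_{2L-1}}x_2^{a_{2L}}\in\mathcal{B}_3$ with total degree $D=\sum_{i=1}^{2L}a_i$. (a) If $a_i\ge1$ for all $i$, then $\deg V_3(\beta)\le 3D-2L$. (b) If $a_i\ge2$ for all $i$ and $L\le4$, then $\deg V_3(\beta)=3D-2L$ and the leading coefficient of $V_3(\beta)$ is $1$.
   Context: $\mathcal{B}_3$ is the 3-strand braid group with standard Artin generators $x_1,x_2$; $V_3(\beta)$ is the Jones polynomial of the closure $\widehat\beta$, normalized by $V(\text{unknot})=1$ and $q^{-1}V_{L_+}-qV_{L_-}=(q^{1/2}-q^{-1/2})V_{L_0}$, in the variable $s=q^{-1/2}$ (a Laurent polynomial in $s$). Conventions: closures of $\alpha x_i^{e+2}\gamma$, $\alpha x_i^{e+1}\gamma$, $\alpha x_i^{e}\gamma$ play the roles of $L_-,L_0,L_+$ (e.g. the closure of $x_1^2\in\mathcal B_2$ has Jones polynomial $-s-s^5$). $\deg$ denotes the highest exponent of $s$. *)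

(* Jones polynomial of closures of 3-braids, via the
   Kauffman bracket state sum realised in the Temperley-Lieb algebra TL_3. *)
From mathcomp Require Import all_boot all_algebra.
Set Implicit Arguments. Unset Strict Implicit. Unset Printing Implicit Defensive.
Import GRing.Theory Num.Theory.
Local Open Scope ring_scope.

(* A letter of a braid word in B_3: (g, inv) stands for x_1 (g = false) or
   x_2 (g = true), raised to the power -1 if inv = true, +1 otherwise. *)
Definition letter := (bool * bool)%type.
Definition bword := seq letter.

(* Elements of TL_3 with coefficients in Z[s], on the basis
   1, e1, e2, e1e2, e2e1. *)
Record tl := TL { tc1 : {poly int}; tce1 : {poly int}; tce2 : {poly int};
                  tce12 : {poly int}; tce21 : {poly int} }.

(* s * d, where d = -(s + s^-1) is the loop value (A = s^(1/2), A^2 = s). *)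
Definition Dp : {poly int} := - ('X^2 + 1).

(* Right multiplication by the Kauffman-bracket-times-writhe weight of a
   letter.  x_i (a NEGATIVE crossing in the paper's convention) has weight
   -(s + s^2 e_i); x_i^-1 has weight -(s^-1 + s^-2 e_i), which is multiplied
   by s^3 to stay polynomial (recorded in [Jshift]).  Products e_i * e_i
   contribute a loop factor d = Dp / s. *)
Definition tl_step (X : tl) (l : letter) : tl :=
  let: (u, v, w) := if l.2 then ('X^2, 'X, Dp) else ('X, 'X^2, 'X * Dp) in
  let: TL c a b c12 c21 := X in
  if ~~ l.1 then
    TL (- (u * c)) (- (u * a + v * (c + c12) + w * a)) (- (u * b))
       (- (u * c12)) (- (u * c21 + v * b + w * c21))
  else
    TL (- (u * c)) (- (u * a)) (- (u * b + v * (c + c21) + w * b))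
       (- (u * c12 + v * a + w * c12)) (- (u * c21)).

Definition tl_word (w : bword) : tl := foldl tl_step (TL 1 0 0 0 0) w.

(* s^(Jshift w) * V_3(w)(s) = Jpoly w, where the closure trace sends a basis
   diagram with l loops to d^(l-1) (multiplied here by s^2). *)
Definition Jpoly (w : bword) : {poly int} :=
  let: TL c a b c12 c21 := tl_word w in
  c * Dp ^+ 2 + (a + b) * ('X * Dp) + (c12 + c21) * 'X^2.

Definition Jshift (w : bword) : nat := (2 + 3 * count snd w)%N.

(* Laurent polynomials in s, represented as p(s) * s^(-k). *)
Record laurent := Laurent { lpoly : {poly int}; lshift : nat }.

Definition ldeg (f : laurent) : int := ((size (lpoly f)).-1)%:Z - (lshift f)%:Z.
Definition llead (f : laurent) : int := lead_coef (lpoly f).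

(* V_3(beta) : the Jones polynomial of the closure, in the variable s = q^(-1/2). *)
Definition V3 (w : bword) : laurent := Laurent (Jpoly w) (Jshift w).

(* beta = x_1^{a_1} x_2^{a_2} x_1^{a_3} ... for a = [:: a_1; a_2; ...]. *)
Definition braid_of_exps (a : seq nat) : bword :=
  flatten [seq nseq p.2 (odd p.1, false) | p <- zip (iota 0 (size a)) a].

From mathcomp Require Import all_boot all_algebra.
From mathcomp Require Import ring zify.
Import GRing.Theory Num.Theory.
Local Open Scope ring_scope.
Set Implicit Arguments.
Unset Strict Implicit.

(* A letter x_i
   multiplies the components ending in e_i by s^3 and the others by s, so the
   degrees grow by at most 3 per letter; but when a new block of x_1's or x_2's
   starts, the top-degree term has to move onto a component ending in the new
   e_i, through a factor s^2 only.  When every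
   exponent is at least 2, the top-degree term is carried by a single
   component, with coefficient +-s^T, all other components staying at least
   two degrees lower, so the bound is attained with leading coefficient 1. *)

Definition x1 : letter := (false, false).
Definition x2 : letter := (true, false).

Lemma tl_step_x1 c a b c12 c21 : tl_step (TL c a b c12 c21) x1 =
  TL (- ('X * c)) ('X^3 * a - 'X^2 * (c + c12)) (- ('X * b)) (- ('X * c12))
     ('X^3 * c21 - 'X^2 * b).
Proof. by rewrite /tl_step /= /Dp; congr TL; ring. Qed.

Lemma tl_step_x2 c a b c12 c21 : tl_step (TL c a b c12 c21) x2 =
  TL (- ('X * c)) (- ('X * a)) ('X^3 * b - 'X^2 * (c + c21))
     ('X^3 * c12 - 'X^2 * a) (- ('X * c21)).
Proof. by rewrite /tl_step /= /Dp; congr TL; ring. Qed.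

Lemma size_addr_le (p q : {poly int}) n :
  (size p <= n)%N -> (size q <= n)%N -> (size (p + q)%R <= n)%N.
Proof. by move=> hp hq; rewrite (leq_trans (size_polyD _ _)) // geq_max hp. Qed.

Lemma size_XnM_le (p : {poly int}) k n :
  (size p <= n - k)%N -> (size ('X^k * p)%R <= n)%N.
Proof.
have [->|p0] := eqVneq p 0; first by rewrite mulr0 size_poly0.
by rewrite mulrC size_mulXn //; have := size_poly_gt0 p; rewrite p0; lia.
Qed.

Lemma size_XM_le (p : {poly int}) n :
  (size p <= n.-1)%N -> (size ('X * p)%R <= n)%N.
Proof. by move=> hp; apply: (@size_XnM_le _ 1); rewrite subn1. Qed.

Ltac size_bound :=
  first
  [ match goal with h : is_true (size ?p <= _)%N |- is_true (size ?p <= _)%N =>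
      apply: leq_trans h _; lia end
  | apply: size_addr_le; size_bound
  | rewrite size_polyN; size_bound
  | apply: size_XnM_le; size_bound
  | apply: size_XM_le; size_bound ].

Definition tl_size_le (n0 n1 n2 n12 n21 : nat) (S : tl) : Prop :=
  [/\ size (tc1 S) <= n0, size (tce1 S) <= n1, size (tce2 S) <= n2,
      size (tce12 S) <= n12 & size (tce21 S) <= n21]%N.

Lemma tl_size_leW n0 n1 n2 n12 n21 m0 m1 m2 m12 m21 S :
  tl_size_le n0 n1 n2 n12 n21 S ->
  (n0 <= m0)%N -> (n1 <= m1)%N -> (n2 <= m2)%N -> (n12 <= m12)%N -> (n21 <= m21)%N ->
  tl_size_le m0 m1 m2 m12 m21 S.
Proof. by case=> *; split; size_bound. Qed.

Lemma tl_size_le_x1 n0 n1 n2 n12 n21 m0 m1 m2 m12 m21 S :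
  tl_size_le n0 n1 n2 n12 n21 S ->
  (n0 <= m0.-1)%N -> (n1 <= m1 - 3)%N -> (maxn n0 n12 <= m1 - 2)%N ->
  (n2 <= m2.-1)%N -> (n12 <= m12.-1)%N -> (n21 <= m21 - 3)%N -> (n2 <= m21 - 2)%N ->
  tl_size_le m0 m1 m2 m12 m21 (tl_step S x1).
Proof.
case: S => c a b c12 c21 [] *.
by rewrite tl_step_x1; split; size_bound.
Qed.

Lemma tl_size_le_x2 n0 n1 n2 n12 n21 m0 m1 m2 m12 m21 S :
  tl_size_le n0 n1 n2 n12 n21 S ->
  (n0 <= m0.-1)%N -> (n1 <= m1.-1)%N -> (n2 <= m2 - 3)%N -> (maxn n0 n21 <= m2 - 2)%N ->
  (n12 <= m12 - 3)%N -> (n1 <= m12 - 2)%N -> (n21 <= m21.-1)%N ->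
  tl_size_le m0 m1 m2 m12 m21 (tl_step S x2).
Proof.
case: S => c a b c12 c21 [] *.
by rewrite tl_step_x2; split; size_bound.
Qed.

Definition lead_term (p : {poly int}) (T : nat) (e : int) : Prop :=
  (size (p - e%:P * 'X^T)%R <= T)%N.

Lemma lead_termP (p : {poly int}) T e : e != 0 -> lead_term p T e ->
  size p = T.+1 /\ lead_coef p = e.
Proof.
rewrite /lead_term => e0 hp.
have hmon : size (e%:P * 'X^T) = T.+1 by rewrite mul_polyC size_scale ?size_polyXn.
have -> : p = e%:P * 'X^T + (p - e%:P * 'X^T) by rewrite addrC subrK.
have hlt : (size (p - e%:P * 'X^T)%R < size (e%:P * 'X^T)%R)%N by rewrite hmon ltnS.
by rewrite size_polyDl // lead_coefDl // hmon mul_polyC lead_coefZ lead_coefXn mulr1.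
Qed.

Lemma lead_term_x1_enter S T e :
  lead_term (tc1 S + tce12 S) T e -> (size (tce1 S) <= T.-1)%N ->
  lead_term (tce1 (tl_step S x1)) (T + 2) (- e).
Proof.
case: S => c a b c12 c21; rewrite tl_step_x1 /lead_term /= => *.
have -> : 'X^3 * a - 'X^2 * (c + c12) - (- e)%:P * 'X^(T + 2) =
          'X^3 * a - 'X^2 * (c + c12 - e%:P * 'X^T) by rewrite exprD; ring.
size_bound.
Qed.

Lemma lead_term_x1 S T e :
  lead_term (tce1 S) T e -> (size (tc1 S) <= T.+1)%N -> (size (tce12 S) <= T.+1)%N ->
  lead_term (tce1 (tl_step S x1)) (T + 3) e.
Proof.
case: S => c a b c12 c21; rewrite tl_step_x1 /lead_term /= => *.
have -> : 'X^3 * a - 'X^2 * (c + c12) - e%:P * 'X^(T + 3) =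
          'X^3 * (a - e%:P * 'X^T) - 'X^2 * (c + c12) by rewrite exprD; ring.
size_bound.
Qed.

Lemma lead_term_x2_enter S T e :
  lead_term (tce1 S) T e -> (size (tc1 S) <= T.+1)%N -> (size (tce12 S) <= T.-1)%N ->
  lead_term (tc1 (tl_step S x2) + tce12 (tl_step S x2)) (T + 2) (- e).
Proof.
case: S => c a b c12 c21; rewrite tl_step_x2 /lead_term /= => *.
have -> : - ('X * c) + ('X^3 * c12 - 'X^2 * a) - (- e)%:P * 'X^(T + 2) =
          - ('X * c) + 'X^3 * c12 - 'X^2 * (a - e%:P * 'X^T) by rewrite exprD; ring.
size_bound.
Qed.

Lemma lead_term_x2 S T e :
  lead_term (tc1 S + tce12 S) T e -> (size (tc1 S) <= T)%N -> (size (tce1 S) <= T.+1)%N ->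
  lead_term (tc1 (tl_step S x2) + tce12 (tl_step S x2)) (T + 3) e.
Proof.
case: S => c a b c12 c21; rewrite tl_step_x2 /lead_term /= => *.
have -> : - ('X * c) + ('X^3 * c12 - 'X^2 * a) - e%:P * 'X^(T + 3) =
          'X^3 * (c + c12 - e%:P * 'X^T) - 'X^3 * c - 'X^2 * a - 'X * c
  by rewrite exprD; ring.
size_bound.
Qed.

Lemma foldl_nseq_ind {A B : Type} {f : A -> B -> A} {P : nat -> A -> Prop} {l k} :
  (forall T x, P T x -> P (T + k)%N (f x l)) ->
  forall m T x, P T x -> P (T + k * m)%N (foldl f x (nseq m l)).
Proof.
move=> hstep; elim=> [|m IH] T x hx /=; first by rewrite muln0 addn0.
by rewrite mulnS addnA; apply: IH; apply: hstep.
Qed.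

Lemma braid_of_exps_cons2 m1 m2 r :
  braid_of_exps [:: m1, m2 & r] = nseq m1 x1 ++ nseq m2 x2 ++ braid_of_exps r.
Proof.
have shift2 k s : [seq nseq p.2 (odd p.1, false) | p <- zip (iota k.+2 (size s)) s] =
                  [seq nseq p.2 (odd p.1, false) | p <- zip (iota k (size s)) s].
  by elim: s k => //= m s IH k; rewrite IH negbK.
by rewrite /braid_of_exps /= shift2.
Qed.

Lemma count_snd_braid_of_exps a : count snd (braid_of_exps a) = 0%N.
Proof.
apply/eqP; rewrite -leqn0 leqNgt -has_count; apply/hasPn => l.
by case/flattenP=> _ /mapP [p _ ->] /nseqP [->].
Qed.

Lemma size_le_sumn (a : seq nat) :
  (forall ai, ai \in a -> 0 < ai)%N -> (size a <= sumn a)%N.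
Proof.
elim: a => //= m a IH pos; rewrite -add1n leq_add ?pos ?mem_head //.
by apply: IH => ai ai_a; rewrite pos // in_cons ai_a orbT.
Qed.

Lemma braid_blocks_ind (P Q : nat -> tl -> Prop) amin :
  (0 < amin)%N -> (forall T S, Q T S -> P T S) ->
  (forall m1 m2 T S, (amin <= m1)%N -> (amin <= m2)%N -> P T S ->
     Q (T + 3 * (m1 + m2) - 2)%N (foldl tl_step S (nseq m1 x1 ++ nseq m2 x2))) ->
  forall L (a : seq nat) T S, size a = (2 * L.+1)%N ->
  (forall ai, ai \in a -> amin <= ai)%N ->
  P T S -> Q (T + 3 * sumn a - 2 * L.+1)%N (foldl tl_step S (braid_of_exps a)).
Proof.
move=> amin_gt0 QP block; elim=> [|L IH] [|m1 [|m2 r]] T S //= size_a big hP.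
all: have m1_big : (amin <= m1)%N by apply: big; rewrite mem_head.
all: have m2_big : (amin <= m2)%N by apply: big; rewrite !in_cons eqxx orbT.
all: rewrite braid_of_exps_cons2 catA foldl_cat.
- case: r size_a {big} => // _.
  by rewrite /= addn0; apply: block.
- have -> : (T + 3 * (m1 + (m2 + sumn r)) - 2 * L.+2 =
             T + 3 * (m1 + m2) - 2 + 3 * sumn r - 2 * L.+1)%N by lia.
  apply: IH; first lia.
  + by move=> ai ai_r; apply: big; rewrite !in_cons ai_r !orbT.
  + exact/QP/block.
Qed.

(* In the invariants [ub_*] and [top_*], [T] is the degree budget: 3 per letter
   read, minus 1 per block entered.  The suffix names the last letter read;
   [_first] means that it opened its block. *)
Definition ub_start T := tl_size_le T.+1 T T T.+1 T.-1.
Definition ub_x1 T := tl_size_le T T.+1 T.-1 T T.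
Definition ub_x2 T := tl_size_le T.-1 T T T.+1 T.-1.

Lemma ub_start_x1 T S : ub_start T S -> ub_x1 (T + 2) (tl_step S x1).
Proof. by move/tl_size_le_x1; apply; lia. Qed.

Lemma ub_x1_x1 T S : ub_x1 T S -> ub_x1 (T + 3) (tl_step S x1).
Proof. by move/tl_size_le_x1; apply; lia. Qed.

Lemma ub_x1_x2 T S : ub_x1 T S -> ub_x2 (T + 2) (tl_step S x2).
Proof. by move/tl_size_le_x2; apply; lia. Qed.

Lemma ub_x2_x2 T S : ub_x2 T S -> ub_x2 (T + 3) (tl_step S x2).
Proof. by move/tl_size_le_x2; apply; lia. Qed.

Lemma ub_x2_start T S : ub_x2 T S -> ub_start T S.
Proof. by move/tl_size_leW; apply; lia. Qed.

Lemma ub_block m1 m2 T S : (1 <= m1)%N -> (1 <= m2)%N -> ub_start T S ->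
  ub_x2 (T + 3 * (m1 + m2) - 2) (foldl tl_step S (nseq m1 x1 ++ nseq m2 x2)).
Proof.
case: m1 m2 => [|m1] [|m2] // _ _ /ub_start_x1 /(foldl_nseq_ind ub_x1_x1 m1) h.
have {}h := foldl_nseq_ind ub_x2_x2 m2 (ub_x1_x2 h).
by rewrite foldl_cat /=; congr (ub_x2 _ _): h; lia.
Qed.

Definition top_start T S :=
  tl_size_le T.+1 (T - 2) (T - 2) T.+1 (T - 5) S /\ lead_term (tc1 S + tce12 S) T 1.
Definition top_x1_first T S :=
  tl_size_le T T.+1 (T - 3) T (T - 2) S /\ lead_term (tce1 S) T (-1).
Definition top_x1 T S :=
  tl_size_le (T - 2) T.+1 (T - 5) (T - 2) (T - 2) S /\ lead_term (tce1 S) T (-1).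
Definition top_x2_first T S :=
  tl_size_le (T - 3) T (T - 2) T.+1 (T - 3) S /\ lead_term (tc1 S + tce12 S) T 1.
Definition top_x2 T S :=
  tl_size_le (T - 2) (T - 2) (T - 2) T.+1 (T - 5) S /\ lead_term (tc1 S + tce12 S) T 1.

Lemma top_start_x1 T S : top_start T S -> top_x1_first (T + 2) (tl_step S x1).
Proof.
case=> hS hlead; split; first by move: hS => /tl_size_le_x1; apply; lia.
by case: hS => *; apply: lead_term_x1_enter hlead _; size_bound.
Qed.

Lemma top_x1_first_x1 T S : top_x1_first T S -> top_x1 (T + 3) (tl_step S x1).
Proof.
case=> hS hlead; split; first by move: hS => /tl_size_le_x1; apply; lia.
by case: hS => *; apply: lead_term_x1 hlead _ _; size_bound.
Qed.

Lemma top_x1_x1 T S : top_x1 T S -> top_x1 (T + 3) (tl_step S x1).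
Proof.
case=> hS hlead; split; first by move: hS => /tl_size_le_x1; apply; lia.
by case: hS => *; apply: lead_term_x1 hlead _ _; size_bound.
Qed.

Lemma top_x1_x2 T S : top_x1 T S -> top_x2_first (T + 2) (tl_step S x2).
Proof.
case=> hS hlead; split; first by move: hS => /tl_size_le_x2; apply; lia.
by case: hS => *; apply: lead_term_x2_enter hlead _ _; size_bound.
Qed.

Lemma top_x2_first_x2 T S : top_x2_first T S -> top_x2 (T + 3) (tl_step S x2).
Proof.
case=> hS hlead; split; first by move: hS => /tl_size_le_x2; apply; lia.
by case: hS => *; apply: lead_term_x2 hlead _ _; size_bound.
Qed.

Lemma top_x2_x2 T S : top_x2 T S -> top_x2 (T + 3) (tl_step S x2).
Proof.
case=> hS hlead; split; first by move: hS => /tl_size_le_x2; apply; lia.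
by case: hS => *; apply: lead_term_x2 hlead _ _; size_bound.
Qed.

Lemma top_x2_start T S : top_x2 T S -> top_start T S.
Proof. by case=> /tl_size_leW hS hlead; split => //; apply: hS; lia. Qed.

Lemma top_block m1 m2 T S : (2 <= m1)%N -> (2 <= m2)%N -> top_start T S ->
  top_x2 (T + 3 * (m1 + m2) - 2) (foldl tl_step S (nseq m1 x1 ++ nseq m2 x2)).
Proof.
case: m1 m2 => [|[|m1]] [|[|m2]] // _ _.
move=> /top_start_x1 /top_x1_first_x1 /(foldl_nseq_ind top_x1_x1 m1) h.
have {}h := foldl_nseq_ind top_x2_x2 m2 (top_x2_first_x2 (top_x1_x2 h)).
by rewrite foldl_cat /=; congr (top_x2 _ _): h; lia.
Qed.

Lemma ub_start0 : ub_start 0 (TL 1 0 0 0 0).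
Proof. by rewrite /ub_start /tl_size_le /= size_poly1 size_poly0. Qed.

Lemma top_start0 : top_start 0 (TL 1 0 0 0 0).
Proof.
split; first by rewrite /tl_size_le /= size_poly1 size_poly0.
by rewrite /lead_term /= addr0 expr0 mulr1 subrr size_poly0.
Qed.

Lemma size_Jpoly_le T w : ub_x2 T (tl_word w) -> (size (Jpoly w) <= T + 3)%N.
Proof.
rewrite /Jpoly; case: (tl_word w) => c a b c12 c21 [/= *].
have -> : c * Dp ^+ 2 + (a + b) * ('X * Dp) + (c12 + c21) * 'X^2 =
  'X^2 * (c + c12) + 'X^4 * c + 'X^2 * c + c - 'X^3 * (a + b) - 'X * (a + b) + 'X^2 * c21
  by rewrite /Dp; ring.
size_bound.
Qed.

Lemma lead_term_Jpoly T w : top_x2 T (tl_word w) -> lead_term (Jpoly w) (T + 2) 1.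
Proof.
rewrite /Jpoly; case: (tl_word w) => c a b c12 c21 [+ hlead]; case=> *.
rewrite /lead_term in hlead *.
have -> : c * Dp ^+ 2 + (a + b) * ('X * Dp) + (c12 + c21) * 'X^2 - 1%:P * 'X^(T + 2) =
  'X^2 * (c + c12 - 1%:P * 'X^T) + 'X^4 * c + 'X^2 * c + c
  - 'X^3 * (a + b) - 'X * (a + b) + 'X^2 * c21
  by rewrite /Dp exprD; ring.
size_bound.
Qed.

Lemma ldeg_V3 w : count snd w = 0%N -> ldeg (V3 w) = (size (Jpoly w)).-1%:Z - 2.
Proof. by rewrite /ldeg /V3 /Jshift /= => ->. Qed.

Unset Implicit Arguments.

Theorem theorem1p6 (L : nat) (a : seq nat) :
  (1 <= L)%N -> size a = (2 * L)%N ->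
  ((forall ai, ai \in a -> (1 <= ai)%N) ->
     ldeg (V3 (braid_of_exps a)) <= 3 * (sumn a)%:Z - 2 * L%:Z) /\
  ((forall ai, ai \in a -> (2 <= ai)%N) -> (L <= 4)%N ->
     ldeg (V3 (braid_of_exps a)) = 3 * (sumn a)%:Z - 2 * L%:Z /\
     llead (V3 (braid_of_exps a)) = 1).
Proof.
case: L => // L _ size_a; rewrite ldeg_V3 ?count_snd_braid_of_exps //.
split=> [pos | big _].
- have := size_Jpoly_le
    (braid_blocks_ind (amin := 1) isT ub_x2_start ub_block size_a pos ub_start0).
  have := size_le_sumn pos; lia.
- have pos ai : ai \in a -> (0 < ai)%N by move/big; lia.
  have := lead_term_Jpoly
    (braid_blocks_ind (amin := 2) isT top_x2_start top_block size_a big top_start0).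
  case/lead_termP=> // size_J lead_J; split; last exact: lead_J.
  have := size_le_sumn pos; lia.
Qed.
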